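(* For integers $r\ge1$, $n\ge0$, the set \[ S_n=\left\{\mathbf{a}\in\mathbb{Z}^r \;\middle|\; a_1\ge0,\ldots,a_r\ge0,\ \sum_{i=1}^r a_i\le n\right\} \] is integrally-poised for polynomials of degree $n$.
   Context: A numerical (integer-valued) polynomial is a polynomial $f\in\mathbb{Q}[x_1,\ldots,x_r]$ with $f(\mathbf{x})\in\mathbb{Z}$ for all $\mathbf{x}\in\mathbb{Z}^r$. A subset $S\subseteq\mathbb{Z}^r$ is integrally-poised for polynomials of degree $n$ if there exists a family of numerical polynomials $\{c_{\mathbf{a}}\}_{\mathbf{a}\in S}$ such that $f(\mathbf{x})=\sum_{\mathbf{a}\in S}c_{\mathbf{a}}(\mathbf{x})f(\mathbf{a})$ for all polynomials $f$ of degree $n$ and all $\mathbf{x}\in\mathbb{Z}^r$. *)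

From HB Require Import structures.
From mathcomp Require Import all_boot all_order all_algebra.
From mathcomp Require Import mpoly.
Set Implicit Arguments. Unset Strict Implicit. Unset Printing Implicit Defensive.
Import Order.TTheory GRing.Theory Num.Theory.
Local Open Scope ring_scope.

Definition zpt (r : nat) (x : 'I_r -> int) : 'I_r -> rat := fun i => (x i)%:~R.

Definition numerical (r : nat) (p : {mpoly rat[r]}) : Prop :=
  forall x : 'I_r -> int, exists z : int, p.@[zpt x] = z%:~R.

Definition integrally_poised (r n : nat) (S : seq {ffun 'I_r -> int}) : Prop :=
  exists c : {ffun 'I_r -> int} -> {mpoly rat[r]},
    (forall a, a \in S -> numerical (c a)) /\
    forall f : {mpoly rat[r]}, (msize f <= n.+1)%N ->
      forall x : 'I_r -> int,
        f.@[zpt x] = \sum_(a <- undup S) (c a).@[zpt x] * f.@[zpt a].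

Arguments integrally_poised : clear implicits.

(* S_n = { a in Z^r | a_i >= 0, sum_i a_i <= n }. Every such a has 0 <= a_i <= n,
   so it is enumerated from {ffun 'I_r -> 'I_(n.+1)}. *)
Definition simplex_pts (r n : nat) : seq {ffun 'I_r -> int} :=
  map (fun a : {ffun 'I_r -> 'I_n.+1} => [ffun i => ((a i : nat)%:Z)])
    (filter (fun a : {ffun 'I_r -> 'I_n.+1} => (\sum_(i < r) (a i : nat) <= n)%N)
       (enum {ffun 'I_r -> 'I_n.+1})).

(* Newton's forward-difference formula x ^ e = \sum_k (Delta^k t^e)(0) * binomial(x, k)
   expands every monomial x^m with |m| <= n over the products
   \prod_i binomial(x_i, u_i), u in S_n, and the mixed difference (Delta^u f)(0)
   = \sum_(a <= u) \prod_i (-1)^(u_i - a_i) binomial(u_i, a_i) f(a) only involves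
   values of f on S_n.  Collecting the coefficient of f(a) yields
   c_a(x) = \sum_(u in S_n) \prod_i (-1)^(u_i - a_i) binomial(u_i, a_i) binomial(x_i, u_i),
   which is integer-valued since binomial(x, k) is an integer for every integer x. *)

From mathcomp Require Import all_boot all_order all_algebra.
From mathcomp Require Import mpoly.
From mathcomp Require Import ring.
Set Implicit Arguments. Unset Strict Implicit. Unset Printing Implicit Defensive.
Import Order.TTheory GRing.Theory Num.Theory.
Local Open Scope ring_scope.

Section ForwardDifference.
Variable R : comPzRingType.

Definition fdcoef (k j : nat) : R := (-1) ^+ (k - j) * 'C(k, j)%:R.

(* [fdiff_pow k e] is the k-th forward difference of [t ^+ e] at [t = 0]. *)
Definition fdiff_pow (k e : nat) : R := \sum_(j < k.+1) fdcoef k j * j%:R ^+ e.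

Lemma fdcoef_small k j : (k < j)%N -> fdcoef k j = 0.
Proof. by move=> ltkj; rewrite /fdcoef bin_small ?mulr0. Qed.

Lemma fdcoefS_mul k j : (j <= k.+1)%N ->
  fdcoef k.+1 j * j%:R = k.+1%:R * (fdcoef k.+1 j + fdcoef k j).
Proof.
rewrite leq_eqVlt ltnS => /predU1P[->|lejk].
  by rewrite (@fdcoef_small k k.+1) // /fdcoef subnn binn; ring.
have bin_down : (k.+1%:R - j%:R) * 'C(k.+1, j)%:R = k.+1%:R * 'C(k, j)%:R :> R.
  by rewrite -natrB 1?leqW // -!natrM -mul_bin_down.
rewrite /fdcoef subSn // exprS; apply/eqP; rewrite -subr_eq0; apply/eqP.
transitivity ((-1) ^+ (k - j) *
  ((k.+1%:R - j%:R) * 'C(k.+1, j)%:R - k.+1%:R * 'C(k, j)%:R) : R); first ring.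
by rewrite bin_down subrr mulr0.
Qed.

Lemma fdiff_pow0 k : fdiff_pow k.+1 0 = 0.
Proof.
transitivity ((-1 + 1 : R) ^+ k.+1); last by rewrite addNr expr0n.
by rewrite exprDn; apply: eq_bigr => j _; rewrite /fdcoef expr1n !mulr1 mulr_natr.
Qed.

Lemma fdiff_pow0S e : fdiff_pow 0 e.+1 = 0.
Proof. by rewrite /fdiff_pow big_ord1 expr0n mulr0. Qed.

Lemma fdiff_powS k e :
  fdiff_pow k.+1 e.+1 = k.+1%:R * (fdiff_pow k.+1 e + fdiff_pow k e).
Proof.
have -> : fdiff_pow k e = \sum_(j < k.+2) fdcoef k j * j%:R ^+ e.
  by rewrite big_ord_recr /= fdcoef_small // mul0r addr0.
rewrite /fdiff_pow -big_split mulr_sumr; apply: eq_bigr => j _ /=.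
rewrite exprS mulrA fdcoefS_mul; last by rewrite -ltnS ltn_ord.
by rewrite -mulrA mulrDl.
Qed.

Lemma fdiff_pow_small e k : (e < k)%N -> fdiff_pow k e = 0.
Proof.
elim: e k => [|e IH] [|k] // ltek; first exact: fdiff_pow0.
by rewrite fdiff_powS !IH ?addr0 ?mulr0 // ltnW.
Qed.

Lemma fdiff_pow_widen n k e : (k <= n)%N ->
  \sum_(j < n.+1) fdcoef k j * j%:R ^+ e = fdiff_pow k e.
Proof.
move=> lekn; rewrite /fdiff_pow.
rewrite (@big_ord_widen R 0 +%R k.+1 n.+1 (fun j => fdcoef k j * j%:R ^+ e)) //.
rewrite [RHS]big_mkcond; apply: eq_bigr => j _; case: ifPn => // ltjk.
by rewrite fdcoef_small ?mul0r // ltnNge -ltnS.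
Qed.

End ForwardDifference.

Fixpoint binomr (R : numFieldType) (k : nat) (x : R) : R :=
  if k is k'.+1 then binomr k' x * (x - k'%:R) / k'.+1%:R else 1.
Arguments binomr {R} k x : simpl never.

Section BinomialFunction.
Variable R : numFieldType.
Implicit Type x : R.

Lemma binomr0 x : binomr 0 x = 1.
Proof. by []. Qed.

Lemma binomrS k x : binomr k.+1 x = binomr k x * (x - k%:R) / k.+1%:R.
Proof. by []. Qed.

Lemma mulr_binomr k x : x * binomr k x = k.+1%:R * binomr k.+1 x + k%:R * binomr k x.
Proof. by rewrite binomrS; field; rewrite addrC natr1 pnatr_eq0. Qed.

Lemma expr_newton e N x : (e < N)%N ->
  x ^+ e = \sum_(k < N) fdiff_pow R k e * binomr k x.
Proof.
elim: e N => [|e IHe] [|N] // lteN.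
  rewrite big_ord_recl big1 => [|k _]; last by rewrite fdiff_pow0 mul0r.
  by rewrite /fdiff_pow big_ord1 /fdcoef bin0 binomr0; ring.
have shift (G : nat -> R) : G 0%N = 0 -> G N = 0 ->
    \sum_(k < N) G k = \sum_(k < N) G k.+1.
  move=> G0 GN; have /= := @big_ord_recl R 0 +%R N (fun i : 'I_N.+1 => G i).
  by rewrite big_ord_recr /= G0 GN addr0 add0r.
rewrite exprS (IHe N lteN) mulr_sumr big_ord_recl fdiff_pow0S mul0r add0r.
under eq_bigr do rewrite mulrCA mulr_binomr mulrDr.
under [RHS]eq_bigr do rewrite fdiff_powS mulrDr mulrDl.
rewrite !big_split /= addrC; congr (_ + _); last first.
  by apply: eq_bigr => k _; rewrite mulrCA mulrA.
pose G k := k%:R * fdiff_pow R k e * binomr k x.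
transitivity (\sum_(k < N) G k); first by apply: eq_bigr => k _; rewrite mulrCA mulrA.
by rewrite shift /G ?mul0r // fdiff_pow_small ?mulr0 ?mul0r.
Qed.

Lemma binomr_nat n k : binomr k n%:R = 'C(n, k)%:R :> R.
Proof.
elim: k => [|k IHk]; first by rewrite binomr0 bin0.
rewrite binomrS IHk; have [lekn|ltnk] := leqP k n; last by rewrite !bin_small ?mul0r // ltnW.
have bin_left : 'C(n, k)%:R * (n%:R - k%:R) = 'C(n, k.+1)%:R * k.+1%:R :> R.
  by rewrite -natrB // -!natrM mulnC -mul_bin_left mulnC.
by rewrite bin_left mulfK // pnatr_eq0.
Qed.

Lemma binomr_Nnat n k : binomr k (- n.+1%:R) = (-1) ^+ k * 'C(n + k, k)%:R :> R.
Proof.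
elim: k => [|k IHk]; first by rewrite binomr0 bin0 expr0 mulr1.
have bin_diag : (n + k).+1%:R * 'C(n + k, k)%:R = 'C(n + k.+1, k.+1)%:R * k.+1%:R :> R.
  by rewrite -!natrM addnS mul_bin_diag mulnC.
rewrite binomrS IHk.
transitivity ((-1) ^+ k.+1 * ((n + k).+1%:R * 'C(n + k, k)%:R / k.+1%:R) : R).
  by rewrite exprS -addSn natrD; ring.
by rewrite bin_diag mulfK // pnatr_eq0.
Qed.

End BinomialFunction.

Lemma binomr_int (R : archiNumFieldType) k (x : R) :
  x \is a Num.int -> binomr k x \is a Num.int.
Proof.
move=> /intrP[[n|n] ->]; first by rewrite binomr_nat rpred_nat.
by rewrite NegzE intrN binomr_Nnat rpredM ?rpredX ?rpredN1 ?rpred_nat.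
Qed.

Section SimplexInterpolation.
Variables (R : numFieldType) (r n : nat).
Local Notation grid := {ffun 'I_r -> 'I_n.+1}.

Definition in_simplex (u : grid) : bool := (\sum_i (u i : nat) <= n)%N.

Lemma sum_simplex_prod (h : 'I_r -> 'I_n.+1 -> R) (b : 'I_r -> nat) :
    (\sum_i b i <= n)%N -> (forall i (k : 'I_n.+1), (b i < k)%N -> h i k = 0) ->
  \sum_(u : grid | in_simplex u) \prod_i h i (u i) = \prod_i \sum_(k : 'I_n.+1) h i k.
Proof.
move=> leb_n hb; rewrite bigA_distr_bigA [RHS](bigID in_simplex) /=.
rewrite [X in _ + X]big1 ?addr0 // => u /negP u_out.
case: (boolP [exists i, (b i < u i)%N]) => [/existsP[i ltbu]|].
  by rewrite (bigD1 i) //= hb // mul0r.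
rewrite negb_exists => /forallP leub; case: u_out.
by apply: leq_trans leb_n; apply: leq_sum => i _; rewrite leqNgt leub.
Qed.

Lemma sum_simplex_fdiff (u : grid) (m : 'I_r -> nat) : in_simplex u ->
  \sum_(t : grid | in_simplex t) \prod_i (fdcoef R (u i) (t i) * (t i)%:R ^+ m i) =
  \prod_i fdiff_pow R (u i) (m i).
Proof.
move=> u_in.
rewrite (sum_simplex_prod (h := fun i k => fdcoef R (u i) k * k%:R ^+ m i) (b := fun i => u i)) //.
  by apply: eq_bigr => i _; apply: fdiff_pow_widen; rewrite -ltnS.
by move=> i k ltuk; rewrite fdcoef_small ?mul0r.
Qed.

Lemma sum_simplex_newton (m : 'I_r -> nat) (v : 'I_r -> R) : (\sum_i m i <= n)%N ->
  \sum_(u : grid | in_simplex u) \prod_i (fdiff_pow R (u i) (m i) * binomr (u i) (v i)) =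
  \prod_i v i ^+ m i.
Proof.
move=> le_m_n.
rewrite (sum_simplex_prod (h := fun i k => fdiff_pow R k (m i) * binomr k (v i)) (b := m)) //.
  apply: eq_bigr => i _; rewrite (@expr_newton _ _ n.+1) // ltnS.
  by apply: leq_trans le_m_n; rewrite (bigD1 i) //= leq_addr.
by move=> i k ltmk; rewrite fdiff_pow_small ?mul0r.
Qed.

Fixpoint mbinom (i : 'I_r) (k : nat) : {mpoly R[r]} :=
  if k is k'.+1 then mbinom i k' * ('X_i - k'%:R%:MP) * (k'.+1%:R^-1)%:MP else 1.

Lemma meval_mbinom i k v : (mbinom i k).@[v] = binomr k (v i).
Proof.
elim: k => [|k IHk] /=; first by rewrite meval1 binomr0.
by rewrite !mevalM mevalB mevalXU !mevalC IHk binomrS.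
Qed.

(* Only points of S_n matter, where [a i = `|a i|]. *)
Definition poised_coef (a : 'I_r -> int) : {mpoly R[r]} :=
  \sum_(u : grid | in_simplex u) (\prod_i fdcoef R (u i) `|a i|) *: \prod_i mbinom i (u i).

Lemma meval_poised_coef a v : (poised_coef a).@[v] =
  \sum_(u : grid | in_simplex u) (\prod_i fdcoef R (u i) `|a i|) * \prod_i binomr (u i) (v i).
Proof.
rewrite raddf_sum; apply: eq_bigr => u _ /=.
by rewrite mevalZ rmorph_prod; congr (_ * _); apply: eq_bigr => i _; apply: meval_mbinom.
Qed.

Lemma simplex_pts_uniq : uniq (simplex_pts r n).
Proof.
rewrite map_inj_uniq; first exact/filter_uniq/enum_uniq.
move=> t1 t2 /ffunP eq_t12.
by apply/ffunP => i; have := eq_t12 i; rewrite !ffunE => -[/val_inj].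
Qed.

Lemma poised_coef_monomial (m : 'I_r -> nat) (v : 'I_r -> R) : (\sum_i m i <= n)%N ->
  \sum_(a <- undup (simplex_pts r n)) (poised_coef a).@[v] * \prod_i (a i)%:~R ^+ m i =
  \prod_i v i ^+ m i.
Proof.
move=> le_m_n; rewrite undup_id ?simplex_pts_uniq // big_map big_filter big_enum_cond /=.
under eq_bigr do rewrite meval_poised_coef mulr_suml.
rewrite exchange_big /= -[RHS](sum_simplex_newton v le_m_n).
apply: eq_bigr => u u_in; rewrite big_split /= -(sum_simplex_fdiff m u_in) mulr_suml.
apply: eq_bigr => t _; rewrite [in RHS]big_split mulrAC.
by congr (_ * _ * _); apply: eq_bigr => i _; rewrite ffunE.
Qed.

End SimplexInterpolation.

Lemma poised_coef_int (R : archiNumFieldType) r n (a : 'I_r -> int) (v : 'I_r -> R) :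
  (forall i, v i \is a Num.int) -> (poised_coef R n a).@[v] \is a Num.int.
Proof.
move=> v_int; rewrite meval_poised_coef rpred_sum // => u _.
rewrite rpredM ?rpred_prod // => i _; last exact: binomr_int.
by rewrite rpredM ?rpredX ?rpredN1 ?rpred_nat.
Qed.

Theorem proposition3p3 (r n : nat) (hr : (1 <= r)%N) :
  integrally_poised r n (simplex_pts r n).
Proof.
exists (poised_coef rat n); split=> [a _ x | f size_f x].
  by apply/intrP/poised_coef_int => i; apply: intr_int.
rewrite mevalE; under [RHS]eq_bigr do rewrite mevalE mulr_sumr.
rewrite exchange_big /=; apply: eq_big_seq => m m_supp.
have le_m_n : (\sum_i m i <= n)%N.
  by rewrite -mdegE -ltnS (leq_trans (msize_mdeg_lt m_supp)).
rewrite -(poised_coef_monomial _ le_m_n) mulr_sumr; apply: eq_bigr => a _.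
by rewrite mulrCA.
Qed.
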